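(* Let $\gamma>0$ or $\gamma<-1$, let $\theta\in\mathbb R^d$, and let $\mathcal X\subseteq\mathbb R^d$. For $x\in\mathcal X$, $y\in\{0,1\}$ define $$S_\gamma(x,y,\theta)=\Big[\frac{\exp\{(\gamma+1)y\,\theta^\top x\}}{1+\exp\{(\gamma+1)\theta^\top x\}}\Big]^{\frac{\gamma}{\gamma+1}}\Big\{y-\frac{\exp\{(\gamma+1)\theta^\top x\}}{1+\exp\{(\gamma+1)\theta^\top x\}}\Big\}x.$$ Let $Q$ be an arbitrary conditional distribution of $Y\in\{0,1\}$ given $X=x$, with conditional probability mass function $q(y|x)$ (not necessarily belonging to the logistic model). Then $$\sup_{x\in\mathcal X}\big|\theta^\top\,\mathbb E_Q[S_\gamma(X,Y,\theta)\mid X=x]\big|<\infty .$$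
   Context: $S_\gamma$ is the $\gamma$-estimating score for the binary logistic model $p(y|x,\theta)=\exp(y\theta^\top x)/(1+\exp(\theta^\top x))$, $y\in\{0,1\}$. $\mathbb E_Q[\cdot\mid X=x]=\sum_{y\in\{0,1\}}(\cdot)\,q(y|x)$. *)

From HB Require Import structures.
From mathcomp Require Import all_boot all_order all_algebra.
From mathcomp Require Import all_classical all_reals all_analysis.
Set Implicit Arguments. Unset Strict Implicit. Unset Printing Implicit Defensive.
Import Order.TTheory GRing.Theory Num.Theory.
Local Open Scope ring_scope.

Definition dotv (R : realType) (d : nat) (u v : 'rV[R]_d) : R :=
  \sum_(i < d) u 0 i * v 0 i.

Definition S_gamma (R : realType) (d : nat) (gamma : R)
    (x : 'rV[R]_d) (y : bool) (theta : 'rV[R]_d) : 'rV[R]_d :=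
  let t := dotv theta x in
  let e := expR ((gamma + 1) * t) in
  ((expR ((gamma + 1) * (y%:R) * t) / (1 + e)) `^ (gamma / (gamma + 1)) *
   (y%:R - e / (1 + e))) *: x.

(* E_Q[S_gamma(X,Y,theta) | X = x] = sum_y S_gamma(x,y,theta) q(y|x) *)
Definition condExpS (R : realType) (d : nat) (gamma : R)
    (q : 'rV[R]_d -> bool -> R) (x : 'rV[R]_d) (theta : 'rV[R]_d) : 'rV[R]_d :=
  \sum_(y : bool) q x y *: S_gamma gamma x y theta.

From HB Require Import structures.
From mathcomp Require Import all_boot all_order all_algebra.
From mathcomp Require Import all_classical all_reals all_analysis.
From mathcomp Require Import ring lra.
Import Order.TTheory GRing.Theory Num.Theory.
Local Open Scope classical_set_scope.
Local Open Scope ring_scope.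

(** Write [t = theta^T x], [g = gamma + 1], [a = gamma / g] (positive exactly
    when [gamma > 0] or [gamma < -1]) and [sigma s = e^s / (1 + e^s)].  For both
    values of [y], [theta^T S_gamma(x, y, theta) = h(s) / g] with [s = +- g t] and
    [h(s) = s (1 - sigma s) (sigma s)^a].  For [s >= 0] the residual
    [1 - sigma s = 1 / (1 + e^s)] tames [s]; for [s < 0] the tempering factor
    [(sigma s)^a <= e^(a s)] does.  So [|h| <= 1 + 1/a] whatever [x] is, and the
    conditional expectation is a convex combination of the two values. *)

Section Sigmoid.
Context {R : realType}.
Implicit Types a s x : R.

Definition sigmoid s : R := expR s / (1 + expR s).

Lemma sigmoid_gt0 s : 0 < sigmoid s.
Proof. by rewrite divr_gt0 ?expR_gt0 // addr_gt0 ?expR_gt0. Qed.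

Lemma sigmoid_le1 s : sigmoid s <= 1.
Proof.
have := expR_gt0 s.
by rewrite /sigmoid ler_pdivrMr; [lra | rewrite addr_gt0 ?expR_gt0].
Qed.

Lemma sigmoid_le_expR s : sigmoid s <= expR s.
Proof.
have := expR_gt0 s.
by rewrite /sigmoid ler_pdivrMr => [?|]; [nra | rewrite addr_gt0 ?expR_gt0].
Qed.

Lemma onem_sigmoid s : 1 - sigmoid s = (1 + expR s)^-1.
Proof. by rewrite /sigmoid; field; have := expR_gt0 s => ?; apply: lt0r_neq0; lra. Qed.

Lemma sigmoidN s : sigmoid (- s) = 1 - sigmoid s.
Proof.
rewrite onem_sigmoid /sigmoid expRN.
by field; have := expR_gt0 s => ?; apply/andP; split; apply: lt0r_neq0; lra.
Qed.

Lemma mul_onem_sigmoid_le1 s : s * (1 - sigmoid s) <= 1.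
Proof.
have := expR_ge1Dx s; have := expR_gt0 s => ? ?.
by rewrite onem_sigmoid -/(s / _) ler_pdivrMr; lra.
Qed.

Lemma powR_sigmoid_le_expR a s : 0 <= a -> sigmoid s `^ a <= expR (a * s).
Proof.
move=> a_ge0; rewrite mulrC expRM.
by apply: ge0_ler_powR; rewrite ?nnegrE ?sigmoid_le_expR // ltW ?sigmoid_gt0 ?expR_gt0.
Qed.

Lemma mul_expRN_le1 x : x * expR (- x) <= 1.
Proof.
have := expR_ge1Dx x => ?; rewrite -(expRxMexpNx_1 x) ler_pM2r ?expR_gt0 //; lra.
Qed.

Lemma norm_sigmoid_residual_le a s : 0 < a ->
  `|s * (1 - sigmoid s) * sigmoid s `^ a| <= 1 + a^-1.
Proof.
move=> a_gt0; have ainv_gt0 : 0 < a^-1 by rewrite invr_gt0.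
have res_ge0 : 0 <= 1 - sigmoid s by rewrite subr_ge0 sigmoid_le1.
have pow_ge0 := powR_ge0 (sigmoid s) a.
have [s_ge0 | s_lt0] := lerP 0 s.
  have pow_le1 : sigmoid s `^ a <= 1.
    by rewrite -[leRHS](powRr0 (sigmoid s)) ger_powR ?sigmoid_gt0 ?sigmoid_le1 ?ltW.
  have := mul_onem_sigmoid_le1 s.
  by rewrite ger0_norm ?mulr_ge0 //; nra.
have tempered : - s * expR (a * s) <= a^-1.
  rewrite -(ler_pM2l a_gt0) divff ?gt_eqF //.
  by have := mul_expRN_le1 (- (a * s)); rewrite opprK; lra.
have := powR_sigmoid_le_expR a s (ltW a_gt0).
have := sigmoid_gt0 s; have sPa_ge0 : 0 <= - s * sigmoid s `^ a by nra.
rewrite ler0_norm; last by rewrite -mulrA nmulr_rle0 ?mulr_ge0.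
nra.
Qed.

End Sigmoid.

Section InnerProduct.
Variables (R : realType) (d : nat).
Implicit Types u v : 'rV[R]_d.

Lemma dotvZr u v c : dotv u (c *: v) = c * dotv u v.
Proof. by rewrite /dotv mulr_sumr; apply: eq_bigr => i _; rewrite mxE mulrCA. Qed.

Lemma dotv_sumr (I : finType) u (v : I -> 'rV[R]_d) :
  dotv u (\sum_i v i) = \sum_i dotv u (v i).
Proof.
rewrite /dotv; under eq_bigr do rewrite summxE mulr_sumr.
exact: exchange_big.
Qed.

End InnerProduct.

Lemma dotv_S_gamma (R : realType) (d : nat) (gamma : R) (x : 'rV[R]_d) (y : bool)
    (theta : 'rV[R]_d) : gamma + 1 != 0 ->
  let s := if y then (gamma + 1) * dotv theta x else - ((gamma + 1) * dotv theta x) in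
  dotv theta (S_gamma gamma x y theta)
    = s * (1 - sigmoid s) * sigmoid s `^ (gamma / (gamma + 1)) / (gamma + 1).
Proof.
move=> g_neq0 s; rewrite /S_gamma /= dotvZr {}/s.
set t := dotv theta x; rewrite -/(sigmoid ((gamma + 1) * t)).
case: y => /=.
  by rewrite mulr1 -/(sigmoid ((gamma + 1) * t)); field.
rewrite mulr0 mul0r expR0 mul1r -onem_sigmoid -sigmoidN sub0r.
have -> : sigmoid ((gamma + 1) * t) = 1 - sigmoid (- ((gamma + 1) * t)).
  by rewrite sigmoidN subKr.
by field.
Qed.

Lemma tempering_exponent_gt0 (R : realFieldType) (gamma : R) :
  0 < gamma \/ gamma < -1 -> 0 < gamma / (gamma + 1).
Proof.
case=> [gamma_gt0 | gamma_lt_N1]; first by rewrite divr_gt0 // addr_gt0.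
by rewrite -mulrNN -invrN divr_gt0 //; lra.
Qed.

Lemma norm_dotv_S_gamma_le (R : realType) (d : nat) (gamma : R) (x : 'rV[R]_d)
    (y : bool) (theta : 'rV[R]_d) : 0 < gamma \/ gamma < -1 ->
  `|dotv theta (S_gamma gamma x y theta)|
    <= (1 + (gamma / (gamma + 1))^-1) / `|gamma + 1|.
Proof.
move=> /tempering_exponent_gt0 a_gt0.
have g_neq0 : gamma + 1 != 0.
  by apply: contraTneq a_gt0 => ->; rewrite invr0 mulr0 ltxx.
rewrite dotv_S_gamma //= normrM normrV ?unitfE // ler_pM2r ?invr_gt0 ?normr_gt0 //.
exact: norm_sigmoid_residual_le.
Qed.

Lemma ler_norm_convex_sum (R : numDomainType) (I : finType) (w f : I -> R) (K : R) :
  (forall i, 0 <= w i) -> \sum_i w i = 1 -> (forall i, `|f i| <= K) ->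
  `|\sum_i w i * f i| <= K.
Proof.
move=> w_ge0 w_sum1 f_le.
apply: le_trans (ler_norm_sum _ _ _) _.
rewrite -[leRHS]mul1r -w_sum1 mulr_suml; apply: ler_sum => i _.
by rewrite normrM ger0_norm // ler_wpM2l.
Qed.

Theorem mainTheorem7 (R : realType) (d : nat) (gamma : R)
    (hgamma : 0 < gamma \/ gamma < -1)
    (theta : 'rV[R]_d) (X : set 'rV[R]_d)
    (q : 'rV[R]_d -> bool -> R)
    (hq0 : forall x, X x -> forall y, 0 <= q x y)
    (hq1 : forall x, X x -> q x false + q x true = 1) :
  exists M : R, forall x, X x ->
    `| dotv theta (condExpS gamma q x theta) | <= M.
Proof.
exists ((1 + (gamma / (gamma + 1))^-1) / `|gamma + 1|) => x Xx.
rewrite /condExpS dotv_sumr; under eq_bigr do rewrite dotvZr.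
apply: ler_norm_convex_sum => [y||y]; first exact: hq0.
  by rewrite big_bool /= addrC hq1.
exact: norm_dotv_S_gamma_le.
Qed.
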